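(* Let $\mathcal{L}\in\mathcal{A}(n,t,\ell)$ and assume there exists $X=(x_1,\dots,x_n)\in\mathcal{L}$, $X\neq\mathbf{0}$, with $|x_i|\le\ell$ for every $1\le i\le n$. Then $N_+(X)\ge t+1$ or $N_-(X)\ge t+1$.
   Context: $\mathcal{S}(n,t,\ell)=\{\mathcal{E}\in\mathbb{Z}^n: 0\le\varepsilon_i\le\ell \text{ for all } i,\ w_H(\mathcal{E})\le t\}$, with $w_H$ the number of nonzero coordinates. A lattice here is the set of integer combinations of $n$ linearly independent vectors of $\mathbb{Z}^n$. $\mathcal{A}(n,t,\ell)$ is the set of lattices $\mathcal{L}\subseteq\mathbb{Z}^n$ such that the translates $X+\mathcal{S}(n,t,\ell)$, $X\in\mathcal{L}$, are pairwise disjoint. For $X\in\mathbb{Z}^n$, $N_+(X)$ is the number of indices $i$ with $x_i>0$ and $N_-(X)$ the number of indices $i$ with $x_i<0$. *)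

From mathcomp Require Import all_boot all_order all_algebra.
Set Implicit Arguments. Unset Strict Implicit. Unset Printing Implicit Defensive.
Import Order.TTheory GRing.Theory Num.Theory.
Local Open Scope ring_scope.

Definition vec (n : nat) := 'I_n -> int.

Definition wH (n : nat) (E : vec n) : nat := #|[set i : 'I_n | E i != 0]|.

Definition inS (n t : nat) (l : int) (E : vec n) : Prop :=
  (forall i, 0 <= E i <= l) /\ (wH E <= t)%N.

Definition lincomb (n : nat) (b : 'I_n -> vec n) (c : 'I_n -> int) : vec n :=
  fun j => \sum_(i < n) c i * b i j.

(* linear independence of b (over Z, equivalently over Q) *)
Definition lin_indep (n : nat) (b : 'I_n -> vec n) : Prop :=
  forall c : 'I_n -> int, (forall j, lincomb b c j = 0) -> forall i, c i = 0.

Definition lattice_of (n : nat) (b : 'I_n -> vec n) (X : vec n) : Prop :=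
  exists c : 'I_n -> int, forall j, X j = lincomb b c j.

Definition is_lattice (n : nat) (L : vec n -> Prop) : Prop :=
  exists b : 'I_n -> vec n, lin_indep b /\ (forall X, L X <-> lattice_of b X).

(* L in A(n,t,l): the translates X + S(n,t,l), X in L, are pairwise disjoint *)
Definition in_A (n t : nat) (l : int) (L : vec n -> Prop) : Prop :=
  is_lattice L /\
  forall X Y : vec n, L X -> L Y -> (exists j, X j != Y j) ->
    ~ (exists E F : vec n, inS t l E /\ inS t l F /\
         forall j, X j + E j = Y j + F j).

Definition Nplus (n : nat) (X : vec n) : nat := #|[set i : 'I_n | 0 < X i]|.
Definition Nminus (n : nat) (X : vec n) : nat := #|[set i : 'I_n | X i < 0]|.

From mathcomp Require Import all_boot all_order all_algebra.
Set Implicit Arguments. Unset Strict Implicit. Unset Printing Implicit Defensive.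
Import Order.TTheory GRing.Theory Num.Theory.
Local Open Scope ring_scope.

(* If N_+(X) <= t and N_-(X) <= t, write X = X^+ - X^-: both parts lie in
   S(n,t,l) when |x_i| <= l, and X + X^- = 0 + X^+ makes the translates of
   X and 0 meet, contradicting packing since X != 0. *)

Definition pos_part (n : nat) (X : vec n) : vec n :=
  fun j => if 0 < X j then X j else 0.

Definition neg_part (n : nat) (X : vec n) : vec n :=
  fun j => if X j < 0 then - X j else 0.

Lemma pos_part_bounded (n : nat) (l : int) (X : vec n) :
  (forall j : 'I_n, `|X j| <= l) -> forall j : 'I_n, 0 <= pos_part X j <= l.
Proof.
move=> Xl j; rewrite /pos_part; case: ifP => [Xj_gt0|_].
  by rewrite ltW //= -(gtr0_norm Xj_gt0) Xl.
by rewrite lexx (le_trans (normr_ge0 _) (Xl j)).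
Qed.

Lemma neg_part_bounded (n : nat) (l : int) (X : vec n) :
  (forall j : 'I_n, `|X j| <= l) -> forall j : 'I_n, 0 <= neg_part X j <= l.
Proof.
move=> Xl j; rewrite /neg_part; case: ifP => [Xj_lt0|_].
  by rewrite oppr_ge0 ltW //= -(ltr0_norm Xj_lt0) Xl.
by rewrite lexx (le_trans (normr_ge0 _) (Xl j)).
Qed.

Lemma wH_pos_part (n : nat) (X : vec n) : wH (pos_part X) = Nplus X.
Proof.
apply: eq_card => j; rewrite !inE /pos_part.
by case: ifP => [/gt_eqF->|_]; rewrite ?eqxx.
Qed.

Lemma wH_neg_part (n : nat) (X : vec n) : wH (neg_part X) = Nminus X.
Proof.
apply: eq_card => j; rewrite !inE /neg_part.
by case: ifP => [Xj_lt0|_]; rewrite ?oppr_eq0 ?(lt_eqF Xj_lt0) ?eqxx.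
Qed.

Lemma addr_neg_part (n : nat) (X : vec n) (j : 'I_n) :
  X j + neg_part X j = 0 + pos_part X j.
Proof.
rewrite /pos_part /neg_part add0r.
by case: (ltrgtP (X j) 0) => [_|_|->]; rewrite ?addrN ?addr0.
Qed.

Lemma lattice_zero (n : nat) (L : vec n -> Prop) :
  is_lattice L -> L (fun _ => 0).
Proof.
move=> [b [_ Lb]]; apply/Lb; exists (fun _ => 0) => j.
by rewrite /lincomb big1 // => k _; rewrite mul0r.
Qed.

Theorem mainTheorem14 (n t : nat) (l : int) (L : vec n -> Prop) (X : vec n) :
  in_A t l L -> L X -> (exists i, X i != 0) -> (forall i, `|X i| <= l) ->
  (t.+1 <= Nplus X)%N \/ (t.+1 <= Nminus X)%N.
Proof.
move=> [latL packL] LX [i0 Xi0] Xl.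
case: (leqP t.+1 (Nplus X)) => [|Nplus_le]; first by left.
case: (leqP t.+1 (Nminus X)) => [|Nminus_le]; first by right.
exfalso; apply: (packL X (fun _ => 0) LX (lattice_zero latL)).
  by exists i0.
exists (neg_part X), (pos_part X); split; [|split].
- by split; [exact: neg_part_bounded | rewrite wH_neg_part -ltnS].
- by split; [exact: pos_part_bounded | rewrite wH_pos_part -ltnS].
- exact: addr_neg_part.
Qed.
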